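(* Suppose processes know neither $n$ nor any upper bound $D$ on the network causal diameter, i.e., the algorithm executed by the processes does not depend on $n$ or $D$. Then there is no deterministic algorithm that solves consensus in every run (for every number of processes $n\ge2$, every assignment of input values, and every sequence of communication graphs satisfying Assumption 1 for some positive integer $D$).
   Context: Model: a finite set $\Pi$ of $n\ge2$ processes runs a deterministic algorithm in synchronous lock-step rounds $r=1,2,\dots$. An adversary fixes an infinite sequence of simple directed graphs $\mathcal{G}^1,\mathcal{G}^2,\dots$ on vertex set $\Pi$; $(p\to q)\in\mathcal{G}^r$ iff $q$ receives $p$'s round-$r$ message in round $r$. In round $r$ each process broadcasts a message determined by its current state (received exactly by its out-neighbours in $\mathcal{G}^r$), then computes its new state from its current state and the set of (sender, message) pairs received in round $r$. Consensus: each process $p$ starts with an input value $v_p$ from an ordered set $V$ with at least two elements and may irrevocably decide; Agreement: any two decided values are equal; Validity: every decided value is some process's input; Termination: every process eventually decides. Causality: $p$ causally influences $q$ in round $t$ if $q=p$ or $(p\to q)\in\mathcal{G}^t$; a causal chain of length $k\ge1$ from $p$ in round $t$ to $q$ is a sequence $p=p_0,\dots,p_k=q$ with $p_i$ causally influencing $p_{i+1}$ in round $t+i$; $d_t(p,q)$ is the least such $k$ ($\infty$ if none). A root component of $\mathcal{G}^t$ is a strongly connected component $\mathcal{R}$ with no edge $(q\to p)$, $p\in\mathcal{R}$, $q\notin\mathcal{R}$. For an interval $I=[r,s]$, an $I$-vertex-stable root component is a set $\mathcal{R}\subseteq\Pi$ that is a root component of $\mathcal{G}^t$ for every $t\in I$.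 When each $\mathcal{G}^x$ has a unique root component $\mathcal{R}^x$, the network causal diameter of round $x$ is $D^x=\max\{d_x(p,q):p\in\mathcal{R}^x,q\in\Pi\}$, and for $I=[r,s]$, $D^I=\max\{D^x:x\in I,\ x+D^x-1\le s\}$ ($\infty$ if empty). An $I$-vertex-stable root component with $I=[r,s]$ is $D$-bounded if $D\ge D^I$ and $D^{s-D+1}\le D$. Assumption 1 (parameter $D$): every $\mathcal{G}^r$ has exactly one root component; every $I$-vertex-stable root component with $|I|\ge D$ is $D$-bounded; and there is an interval $J=[r_{ST},r_{ST}+d]$ with $d>4D$ such that there is a $D$-bounded $J$-vertex-stable root component. *)

From mathcomp Require Import all_boot all_order.
Set Implicit Arguments. Unset Strict Implicit. Unset Printing Implicit Defensive.

(* A (uniform) deterministic algorithm: it is a single object that does not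
   depend on the number of processes n nor on D.  Processes know their own
   (unique, natural-number) identifier and their input value.  In each round a
   process broadcasts [send s]; it then receives, for each sender identifier k,
   either [Some m] (it received m from the process with identifier k) or [None].
   [decision s] is the decision output of a process in state s (if any). *)
Record Algorithm (V : Type) := {
  State : Type;
  Msg : Type;
  init : nat -> V -> State;
  send : State -> Msg;
  trans : State -> (nat -> option Msg) -> State;
  decision : State -> option V
}.

Section Model.
Variable n : nat.
(* communication graphs: G t is the graph of round t (t >= 1);
   G t p q  means the edge (p -> q) is present in round t *)
Variable G : nat -> rel 'I_n.

Section Run.
Variable V : Type.
Variable A : Algorithm V.
Variable ids : 'I_n -> nat.
Variable input : 'I_n -> V.

Definition received (t : nat) (prev : 'I_n -> State A) (p : 'I_n)
  : nat -> option (Msg A) :=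
  fun k => omap (fun q => send (prev q)) [pick q | (ids q == k) && G t q p].

(* run r p = state of p at the end of round r (run 0 = initial state) *)
Fixpoint run (r : nat) : 'I_n -> State A :=
  match r with
  | 0 => fun p => init A (ids p) (input p)
  | r'.+1 => fun p => trans (run r' p) (received r'.+1 (run r') p)
  end.

Definition decides (p : 'I_n) (v : V) : Prop :=
  exists r, decision (run r p) = Some v /\
            forall r', r' < r -> decision (run r' p) = None.

Definition solves_consensus : Prop :=
  [/\ (forall p q v w, decides p v -> decides q w -> v = w),
      (forall p v, decides p v -> exists q, v = input q)
    & (forall p, exists v, decides p v)].
End Run.

Definition influences (t : nat) (p q : 'I_n) : Prop := q = p \/ G t p q.

Definition causal_chain (t : nat) (p q : 'I_n) (k : nat) : Prop :=
  1 <= k /\ exists s : nat -> 'I_n,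
    [/\ s 0 = p, s k = q & forall i, i < k -> influences (t + i) (s i) (s i.+1)].

Definition dist_is (t : nat) (p q : 'I_n) (k : nat) : Prop :=
  causal_chain t p q k /\ forall j, j < k -> ~ causal_chain t p q j.

Definition root_component (t : nat) (R : {set 'I_n}) : Prop :=
  [/\ R != set0,
      {in R &, forall p q, connect (G t) p q},
      (forall p q, p \in R -> connect (G t) p q -> connect (G t) q p -> q \in R)
    & (forall p q, q \in R -> G t p q -> p \in R)].

Definition netdiam_is (x k : nat) : Prop :=
  exists R, root_component x R /\
    (forall p q, p \in R -> exists j, dist_is x p q j /\ j <= k) /\
    (exists p q, p \in R /\ dist_is x p q k).

(* D >= D^I for I = [r, s]  (D^I = infinity if the defining set is empty) *)
Definition DI_le (r s D : nat) : Prop :=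
  (exists x k, [/\ r <= x <= s, netdiam_is x k & x + k - 1 <= s]) /\
  (forall x k, r <= x <= s -> netdiam_is x k -> x + k - 1 <= s -> k <= D).

Definition vs_root (r s : nat) (R : {set 'I_n}) : Prop :=
  forall t, r <= t <= s -> root_component t R.

Definition D_bounded (r s D : nat) : Prop :=
  DI_le r s D /\ exists k, netdiam_is (s.+1 - D) k /\ k <= D.

Definition Assumption1 (D : nat) : Prop :=
  [/\ (forall t, 1 <= t -> exists! R, root_component t R),
      (forall r s R, 1 <= r -> r <= s -> D <= s.+1 - r ->
          vs_root r s R -> D_bounded r s D)
    & (exists rST d R, [/\ 1 <= rST, 4 * D < d,
          vs_root rST (rST + d) R & D_bounded rST (rST + d) D])].

Definition simple_graphs : Prop := forall t p, ~~ G t p p.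
End Model.

(* An algorithm that knows neither n nor D cannot tell an isolated process from
   a process that has merely not heard from anybody yet.  A process with input
   a that never receives a message decides a (run it alone next to a silent
   neighbour) after some r rounds.  Now take r + 2 processes: process 0 has
   input a, all others input b, for the first r rounds the graph is the line
   0 -> 1 -> ... -> r + 1, afterwards a star centred at r + 1.  This satisfies
   Assumption 1 with D = r + 1.  Process 0 hears nothing for r rounds and
   decides a, while the information from process 0 never reaches process
   r + 1, which therefore behaves as in the run where everybody has input b
   and decides b. *)
From mathcomp Require Import all_boot all_order.
From mathcomp Require Import zify.
From Stdlib Require Import FunctionalExtensionality.
Set Implicit Arguments. Unset Strict Implicit. Unset Printing Implicit Defensive.

Lemma influences_dist1 n (G : nat -> rel 'I_n) t p q :
  influences G t p q -> dist_is G t p q 1.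
Proof.
move=> Hpq; split.
  split=> //; exists (fun i => if i == 0 then p else q); split=> // i.
  by rewrite ltnS leqn0 => /eqP -> /=; rewrite addn0.
by move=> j; rewrite ltnS leqn0 => /eqP -> [].
Qed.

Lemma dist_is_leq n (G : nat -> rel 'I_n) t p q k j :
  dist_is G t p q k -> causal_chain G t p q j -> k <= j.
Proof. by move=> [_ Hmin] Hj; rewrite leqNgt; apply/negP => /Hmin. Qed.

Section LineStar.
Variables (n T : nat) (c : 'I_n).

Definition line_star (t : nat) : rel 'I_n := fun i j =>
  if t <= T then j == i.+1 :> nat else (i == c) && (j != c).

Lemma line_star_simple : simple_graphs line_star.
Proof. by move=> t p; rewrite /line_star; case: ifP => _; [apply/eqP; lia | case: eqP]. Qed.

Lemma line_star_line t : t <= T -> line_star t =2 fun i j => j == i.+1 :> nat.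
Proof. by move=> Ht i j; rewrite /line_star Ht. Qed.

Lemma line_star_star t : T < t -> line_star t =2 fun i j => (i == c) && (j != c).
Proof. by move=> Ht i j; rewrite /line_star leqNgt Ht. Qed.

Lemma connect_line t x y : t <= T -> connect (line_star t) x y -> x <= y.
Proof.
move=> Ht /connectP[p]; elim: p x => [|z p IH] x /=; first by move=> _ ->.
rewrite line_star_line // => /andP[/eqP Hz Hp] Hy.
by have := IH z Hp Hy; lia.
Qed.

Lemma connect_star t x y : T < t -> connect (line_star t) x y -> x = y \/ x = c.
Proof.
move=> Ht /connectP[[|z p]] /=; first by move=> _ ->; left.
by rewrite line_star_star // => /andP[/andP[/eqP -> _] _] _; right.
Qed.

Lemma root_component_line t R :
  t <= T -> root_component line_star t R <-> R = [set x : 'I_n | x == 0 :> nat].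
Proof.
move=> Ht; split.
  move=> [/set0Pn[x0 Hx0] Hconn _ Hin].
  have [y0 Hy0 Hv] : exists2 y, y \in R & y = 0 :> nat.
    elim: (x0 : nat) {-2}x0 (erefl (x0 : nat)) Hx0 => [|k IH] x Hx HR.
      by exists x.
    have Hk : k < n by have := ltn_ord x; lia.
    by apply: (IH (Ordinal Hk)) => //; apply: (Hin _ x HR); rewrite line_star_line //= Hx.
  apply/setP => x; rewrite inE; apply/idP/eqP => [Hx | Hx].
    by have := connect_line Ht (Hconn _ _ Hx Hy0); rewrite Hv leqn0 => /eqP.
  by rewrite (_ : x = y0) //; apply: val_inj; rewrite /= Hx Hv.
move=> ->; split.
- by apply/set0Pn; exists (Ordinal (leq_ltn_trans (leq0n c) (ltn_ord c))); rewrite inE.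
- move=> p q; rewrite !inE => /eqP Hp /eqP Hq.
  by rewrite (_ : p = q) //; apply: val_inj; rewrite /= Hp Hq.
- move=> p q; rewrite !inE => /eqP Hp _ /(connect_line Ht).
  by rewrite Hp leqn0.
- by move=> p q; rewrite inE line_star_line // => /eqP ->.
Qed.

Lemma root_component_star t R :
  T < t -> root_component line_star t R <-> R = [set c].
Proof.
move=> Ht; split.
  move=> [/set0Pn[x Hx] Hconn _ Hin].
  have Hc : c \in R.
    have [<- //|Hxc] := eqVneq x c.
    by apply: (Hin c x Hx); rewrite line_star_star // eqxx Hxc.
  apply/setP => y; rewrite inE; apply/idP/eqP => [Hy|-> //].
  by case: (connect_star Ht (Hconn _ _ Hy Hc)).
move=> ->; split.
- by apply/set0Pn; exists c; rewrite set11.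
- by move=> p q; rewrite !inE => /eqP -> /eqP ->.
- by move=> p q; rewrite !inE => /eqP -> _ /(connect_star Ht) [] ->.
- by move=> p q; rewrite inE line_star_star // => /eqP ->; rewrite eqxx andbF.
Qed.

Lemma influences_star t q : T < t -> influences line_star t c q.
Proof.
move=> Ht; have [->|Hqc] := eqVneq q c; first by left.
by right; rewrite line_star_star // eqxx.
Qed.

Lemma netdiam_star t k : T < t -> netdiam_is line_star t k <-> k = 1.
Proof.
move=> Ht; split.
  move=> [R [/(root_component_star _ Ht) -> [_ [p [q [Hp Hd]]]]]].
  move: Hp; rewrite inE => /eqP Hp; subst p.
  have := dist_is_leq Hd (proj1 (influences_dist1 (influences_star q Ht))).
  by case: Hd => -[+ _] _; lia.
move=> ->; exists [set c]; split; first exact/root_component_star.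
split.
  move=> p q; rewrite inE => /eqP ->; exists 1.
  by split=> //; apply/influences_dist1/influences_star.
by exists c, c; split; [rewrite set11 | apply/influences_dist1; left].
Qed.

Hypothesis c_not_line_root : 0 < T -> c != 0 :> nat.

(* A stable root component cannot straddle round T, since the roots are
   {0} and {c} on either side; so long stable intervals lie in the star phase,
   where every causal diameter is 1. *)
Lemma line_star_D_bounded r s R :
  1 <= r -> r <= s -> T.+1 <= s.+1 - r ->
  vs_root line_star r s R -> D_bounded line_star r s T.+1.
Proof.
move=> Hr Hrs Hlen Hvs.
have HTr : T < r.
  rewrite ltnNge; apply/negP => HrT.
  have /(root_component_line _ HrT) HRline : root_component line_star r R.
    by apply: Hvs; rewrite leqnn Hrs.
  have /(root_component_star _ (_ : T < s)) HRstar : root_component line_star s R.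
    by apply: Hvs; rewrite leqnn Hrs.
  have := set11 c; rewrite -HRstar ?HRline ?inE; last lia.
  by rewrite (negbTE (c_not_line_root _)) //; lia.
split; last by exists 1; split=> //; apply/netdiam_star; lia.
split; first by exists r, 1; split; [rewrite leqnn Hrs | exact/netdiam_star | lia].
by move=> x k /andP[Hx _] /netdiam_star -> //; lia.
Qed.

Lemma line_star_assumption1 : Assumption1 line_star T.+1.
Proof.
have vs_star r s : T < r -> vs_root line_star r s [set c].
  by move=> Hr t /andP[Hrt _]; apply/(root_component_star _ (leq_trans Hr Hrt)).
split.
- move=> t _; case: (leqP t T) => Ht.
    by exists [set x : 'I_n | x == 0 :> nat]; split=> [|R /(root_component_line _ Ht)];
      first exact/(root_component_line _ Ht).
  by exists [set c]; split=> [|R /(root_component_star _ Ht)];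
    first exact/(root_component_star _ Ht).
- exact: line_star_D_bounded.
- exists T.+1, (4 * T.+1).+1, [set c]; split=> //; first exact: vs_star.
  by apply: line_star_D_bounded (vs_star _ _ _); lia.
Qed.

End LineStar.

Section Executions.
Variables (n : nat) (G : nat -> rel 'I_n) (V : Type) (A : Algorithm V).
Variable ids : 'I_n -> nat.

Lemma received_local t (f g : 'I_n -> State A) p :
  (forall q, G t q p -> f q = g q) -> received G ids t f p = received G ids t g p.
Proof.
move=> Hfg; apply: functional_extensionality => k; rewrite /received.
by case: pickP => [q /andP[_ /Hfg Hq] | _] //=; rewrite Hq.
Qed.

Lemma run_no_inedge input r p :
  (forall q, ~~ G r.+1 q p) ->
  run G A ids input r.+1 p = trans (run G A ids input r p) (fun _ => None).
Proof.
move=> Hp /=; congr trans; apply: functional_extensionality => k.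
by rewrite /received; case: pickP => // q /andP[_]; rewrite (negbTE (Hp q)).
Qed.

End Executions.

Definition solo V (A : Algorithm V) (i : nat) (v : V) (r : nat) : State A :=
  iter r (fun s => trans s (fun _ => None)) (init A i v).

Lemma run_solo n (G : nat -> rel 'I_n) V (A : Algorithm V) ids input p T :
  (forall t q, 0 < t <= T -> ~~ G t q p) ->
  forall r, r <= T -> run G A ids input r p = solo A (ids p) (input p) r.
Proof.
move=> Hp; elim=> [|r IH] Hr //.
by rewrite run_no_inedge => [|q]; [rewrite IH // ltnW | apply: Hp].
Qed.

Definition decides_at V (S : Type) (dec : S -> option V) (s : nat -> S) v r :=
  dec (s r) = Some v /\ forall r', r' < r -> dec (s r') = None.

Lemma decides_at_eq V S (dec : S -> option V) (s1 s2 : nat -> S) v r :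
  (forall r', r' <= r -> s1 r' = s2 r') ->
  decides_at dec s1 v r -> decides_at dec s2 v r.
Proof.
move=> Heq [Hr Hbefore]; split; first by rewrite -Heq.
by move=> r' Hr'; rewrite -Heq ?Hbefore // ltnW.
Qed.

Lemma run_line_prefix n T (c : 'I_n) V (A : Algorithm V) ids (in1 in2 : 'I_n -> V) k :
  (forall j : 'I_n, k <= j -> in1 j = in2 j) ->
  forall r (j : 'I_n), r <= T -> k + r <= j ->
  run (line_star T c) A ids in1 r j = run (line_star T c) A ids in2 r j.
Proof.
move=> Hin; elim=> [|r IH] j Hr Hj /=; first by rewrite Hin // -(addn0 k).
rewrite (IH j (ltnW Hr)); last lia.
congr trans; apply: received_local => q; rewrite line_star_line // => /eqP Hq.
by apply: IH; [exact: ltnW | lia].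
Qed.

Lemma run_center_after n T (c : 'I_n) V (A : Algorithm V) ids (in1 in2 : 'I_n -> V) :
  run (line_star T c) A ids in1 T c = run (line_star T c) A ids in2 T c ->
  forall r, T <= r -> run (line_star T c) A ids in1 r c = run (line_star T c) A ids in2 r c.
Proof.
move=> HT r /subnK <-; elim: (r - T) => [|k IH] //.
have no_inedge q : ~~ line_star T c (k + T).+1 q c.
  by rewrite line_star_star ?ltnS ?leq_addl // eqxx andbF.
by rewrite addSn !run_no_inedge // IH.
Qed.

Definition uniform_consensus V (A : Algorithm V) : Prop :=
  forall (n : nat) (ids : 'I_n -> nat) (input : 'I_n -> V)
         (G : nat -> rel 'I_n) (D : nat),
    2 <= n -> injective ids -> simple_graphs G ->
    0 < D -> Assumption1 G D -> solves_consensus G A ids input.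

Section Impossibility.
Variables (V : Type) (A : Algorithm V).
Hypothesis A_consensus : uniform_consensus A.

(* Two processes, where process 0 is the centre of a star from round 1 on:
   process 0 never receives anything, yet must decide. *)
Lemma solo_decides i v : exists r, decides_at (@decision _ A) (solo A i v) v r.
Proof.
pose G := line_star 0 (ord0 : 'I_2).
have ids_inj : injective (fun j : 'I_2 => i + j) by move=> x y /addnI /val_inj.
have [_ Hval Hterm] := @A_consensus 2 _ (fun _ => v) G 1 isT ids_inj (line_star_simple _ _) isT
  (line_star_assumption1 (T := 0) (c := ord0) (fun H => H)).
have [w [r Hr]] := Hterm ord0; have [q Hq] := Hval _ _ (ex_intro _ r Hr); subst w.
exists r; apply: decides_at_eq Hr => r' _; rewrite (@run_solo _ _ _ _ _ _ _ r') //.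
  by rewrite addn0.
by move=> t q' /andP[Ht _]; rewrite /G line_star_star // eqxx andbF.
Qed.

Lemma uniform_consensus_trivial (a b : V) : a = b.
Proof.
have [r Hsolo] := solo_decides 0 a.
pose G := line_star r (ord_max : 'I_r.+2).
pose ids := fun j : 'I_r.+2 => val j.
pose mixed := fun j : 'I_r.+2 => if val j == 0 then a else b.
have consensus input := @A_consensus r.+2 ids input G r.+1 isT val_inj (line_star_simple _ _) isT
  (line_star_assumption1 (n := r.+2) (T := r) (c := ord_max) (fun _ => isT)).
have [agree _ _] := consensus mixed.
have [_ valid_b term_b] := consensus (fun _ => b).
have decides_a : decides G A ids mixed ord0 a.
  exists r; apply: decides_at_eq Hsolo => r' Hr'; symmetry.
  apply: (@run_solo _ _ _ _ _ _ _ r) => // t q /andP[_ Ht].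
  by rewrite /G line_star_line.
have line_phase r' (j : 'I_r.+2) : r' <= r -> 1 + r' <= j ->
    run G A ids mixed r' j = run G A ids (fun _ => b) r' j.
  by apply: run_line_prefix => j' Hj'; rewrite /mixed eqn0Ngt Hj'.
have same_view r' : run G A ids mixed r' ord_max = run G A ids (fun _ => b) r' ord_max.
  case: (leqP r r') => Hr'; last by apply: line_phase => /=; lia.
  by apply: run_center_after Hr'; apply: line_phase => /=; lia.
have [w [r' Hw]] := term_b ord_max; have [q Hq] := valid_b _ _ (ex_intro _ r' Hw); subst w.
apply: agree decides_a (ex_intro _ r' _).
by apply: decides_at_eq Hw => r'' _; exact/esym/same_view.
Qed.

End Impossibility.

Theorem theorem3 (d : Order.disp_t) (V : orderType d) (a b : V) (hab : a <> b) :
  ~ exists A : Algorithm V,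
      forall (n : nat) (ids : 'I_n -> nat) (input : 'I_n -> V)
             (G : nat -> rel 'I_n) (D : nat),
        2 <= n -> injective ids -> simple_graphs G ->
        0 < D -> Assumption1 G D ->
        solves_consensus G A ids input.
Proof. by move=> [A HA]; apply/hab/(uniform_consensus_trivial HA). Qed.
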